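(* Assume $A\ge\varepsilon^2/16$. Let $\phi^0\in\mathcal{G}_N$ and define $\phi^{-1}=\phi^0-\Delta t\,\Delta_N\mu^0$ with $\mu^0=-\nabla_N\cdot(|\nabla_N\phi^0|^2\nabla_N\phi^0)+a\phi^0+2\Delta_N\phi^0+\Delta_N^2\phi^0$. Let $(\phi^m)_{m\ge1}$ be generated by the scheme \[ \frac{\frac32\phi^{k+1}-2\phi^k+\frac12\phi^{k-1}}{\Delta t}=\Delta_N\mu_i^{k+1},\quad k\ge0, \] with $i=1$ or $i=2$, where \[ \mu_1^{k+1}=-\nabla_N\cdot(|\nabla_N\phi^{k+1}|^2\nabla_N\phi^{k+1})+a\phi^{k+1}+2\Delta_N(2\phi^k-\phi^{k-1})-A\Delta t\,\Delta_N(\phi^{k+1}-\phi^k)+\Delta_N^2\phi^{k+1}, \] \[ \mu_2^{k+1}=-\nabla_N\cdot(|\nabla_N\phi^{k+1}|^2\nabla_N\phi^{k+1})-\varepsilon(2\phi^k-\phi^{k-1})-A\Delta t\,\Delta_N(\phi^{k+1}-\phi^k)+(1+\Delta_N)^2\phi^{k+1}. \] Suppose that, for some constant $\tilde C_0$ independent of $h$, \[ E_N(\phi^0)+\frac{\Delta t}{4}\|\nabla_N\mu^0\|_2^2+\Delta t^2\|\nabla_N\Delta_N\mu^0\|_2^2\le\tilde C_0 \quad\text{(for } i=1\text{)}, \] \[ E_N(\phi^0)+\frac{\Delta t}{4}\|\nabla_N\mu^0\|_2^2+\frac{\varepsilon\Delta t^2}{2}\|\Delta_N\mu^0\|_2^2\le\tilde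 C_0\quad\text{(for } i=2\text{)}. \] Then $\|\phi^m\|_{H_N^2}\le\tilde C_1$ for all $m\ge1$, where $\tilde C_1>0$ depends on $\Omega$ and $\tilde C_0$ but is independent of $h$, $\Delta t$ and the final time.
   Context: Let $K\in\mathbb{N}$, $N=2K+1$, $h=1/N$, $\Omega=(0,1)^3$, grid points $(ih,jh,kh)$. $\mathcal{G}_N$ is the space of real grid functions on $\mathbb{Z}^3$ that are $N$-periodic in each index; $\langle f,g\rangle=h^3\sum_{i,j,k=0}^{N-1}f_{i,j,k}g_{i,j,k}$, $\|f\|_p=(h^3\sum|f_{i,j,k}|^p)^{1/p}$ (pointwise Euclidean norm for vector-valued grid functions). Each $f\in\mathcal{G}_N$ has discrete Fourier expansion $f_{i,j,k}=\sum_{\ell,m,n=-K}^K\hat f_{\ell,m,n}\exp(2\pi\mathrm{i}(\ell x_i+my_j+nz_k))$; $\mathcal{D}_x$ multiplies coefficients by $2\pi\mathrm{i}\ell$ (similarly $\mathcal{D}_y,\mathcal{D}_z$), $\nabla_Nf=(\mathcal{D}_xf,\mathcal{D}_yf,\mathcal{D}_zf)$, $\nabla_N\cdot(f_1,f_2,f_3)=\mathcal{D}_xf_1+\mathcal{D}_yf_2+\mathcal{D}_zf_3$, $\Delta_N$ multiplies coefficients by $-4\pi^2(\ell^2+m^2+n^2)$; nonlinear products are pointwise. $\|f\|_{H_N^2}^2=\|f\|_2^2+\|\nabla_Nf\|_2^2+\|\Delta_Nf\|_2^2$. The discrete energy is $E_N(\phi)=\frac14\|\nabla_N\phi\|_4^4+\frac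 a2\|\phi\|_2^2-\|\nabla_N\phi\|_2^2+\frac12\|\Delta_N\phi\|_2^2$. Parameters: $\Delta t>0$, $0<\varepsilon<1$, $a=1-\varepsilon>0$, $A$ a constant. *)

From HB Require Import structures.
From mathcomp Require Import all_boot all_order all_algebra.
From mathcomp Require Import all_classical all_reals all_analysis.
From mathcomp Require Import complex.
Set Implicit Arguments. Unset Strict Implicit. Unset Printing Implicit Defensive.
Import Order.TTheory GRing.Theory Num.Theory.
Local Open Scope ring_scope.
Local Open Scope complex_scope.

Section Spectral.
Variables (R : realType) (K : nat).

Definition Ngrid : nat := (2 * K + 1)%N.
Definition hstep : R := 1 / (Ngrid%:R).

(* a grid point / a frequency triple: indices in {0,..,N-1}^3 *)
Definition pt := ('I_Ngrid * 'I_Ngrid * 'I_Ngrid)%type.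
(* an N-periodic real grid function, represented by its values on one period *)
Definition grid := pt -> R.
Definition vgrid := (grid * grid * grid)%type.

(* frequency index j in 'I_N  <->  l = j - K in {-K,..,K} *)
Definition freq (j : 'I_Ngrid) : R := (j%:R - K%:R).

Definition phase (p q : pt) : R :=
  2 * pi * (freq q.1.1 * (p.1.1%:R * hstep)
          + freq q.1.2 * (p.1.2%:R * hstep)
          + freq q.2   * (p.2%:R * hstep)).

Definition expi (t : R) : R[i] := Complex (cos t) (sin t).

(* discrete Fourier coefficients: f_p = sum_q fhat_q exp(i phase p q) *)
Definition fhat (f : grid) (q : pt) : R[i] :=
  ((Ngrid%:R ^+ 3)^-1)%:C * \sum_(p : pt) ((f p)%:C * expi (- phase p q)).

(* Fourier multiplier with symbol sigma (result is real for the symbols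
   below; we take the real part) *)
Definition fmult (sigma : pt -> R[i]) (f : grid) : grid :=
  fun p => complex.Re (\sum_(q : pt) (sigma q * fhat f q * expi (phase p q))).

Definition Dx : grid -> grid := fmult (fun q => Complex 0 (2 * pi * freq q.1.1)).
Definition Dy : grid -> grid := fmult (fun q => Complex 0 (2 * pi * freq q.1.2)).
Definition Dz : grid -> grid := fmult (fun q => Complex 0 (2 * pi * freq q.2)).
Definition LapN : grid -> grid :=
  fmult (fun q => (- 4 * pi ^+ 2 *
     (freq q.1.1 ^+ 2 + freq q.1.2 ^+ 2 + freq q.2 ^+ 2))%:C).

Definition gradN (f : grid) : vgrid := (Dx f, Dy f, Dz f).
Definition divN (u : vgrid) : grid :=
  fun p => Dx u.1.1 p + Dy u.1.2 p + Dz u.2 p.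

Definition gadd (f g : grid) : grid := fun p => f p + g p.
Definition gsub (f g : grid) : grid := fun p => f p - g p.
Definition gscale (c : R) (f : grid) : grid := fun p => c * f p.
Definition vscale (c : grid) (u : vgrid) : vgrid :=
  (fun p => c p * u.1.1 p, fun p => c p * u.1.2 p, fun p => c p * u.2 p).
Definition vsq (u : vgrid) : grid :=
  fun p => u.1.1 p ^+ 2 + u.1.2 p ^+ 2 + u.2 p ^+ 2.

Definition nrm2sq (f : grid) : R := hstep ^+ 3 * \sum_(p : pt) f p ^+ 2.
Definition vnrm2sq (u : vgrid) : R := hstep ^+ 3 * \sum_(p : pt) vsq u p.
Definition vnrm4pow4 (u : vgrid) : R := hstep ^+ 3 * \sum_(p : pt) vsq u p ^+ 2.

Definition H2norm (f : grid) : R :=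
  Num.sqrt (nrm2sq f + vnrm2sq (gradN f) + nrm2sq (LapN f)).

Definition EN (a : R) (phi : grid) : R :=
  vnrm4pow4 (gradN phi) / 4 + a / 2 * nrm2sq phi
  - vnrm2sq (gradN phi) + nrm2sq (LapN phi) / 2.

Definition nlterm (phi : grid) : grid :=
  fun p => - divN (vscale (vsq (gradN phi)) (gradN phi)) p.

Definition mu0 (a : R) (phi0 : grid) : grid :=
  fun p => nlterm phi0 p + a * phi0 p + 2 * LapN phi0 p + LapN (LapN phi0) p.

(* mu_1^{k+1}, from (phi^{k+1}, phi^k, phi^{k-1}) *)
Definition mu1 (a A dt : R) (pn pc pp : grid) : grid :=
  fun p => nlterm pn p + a * pn p
         + 2 * LapN (fun r => 2 * pc r - pp r) p
         - A * dt * LapN (gsub pn pc) p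
         + LapN (LapN pn) p.

(* mu_2^{k+1}; (1 + Delta_N)^2 f = f + 2 Delta_N f + Delta_N^2 f *)
Definition mu2 (eps A dt : R) (pn pc pp : grid) : grid :=
  fun p => nlterm pn p - eps * (2 * pc p - pp p)
         - A * dt * LapN (gsub pn pc) p
         + (pn p + 2 * LapN pn p + LapN (LapN pn) p).

End Spectral.

(* The discrete operators are Fourier multipliers, and the orthogonality of the
   discrete exponentials gives summation by parts: D_x, D_y, D_z are
   skew-adjoint, Delta_N is self-adjoint and ||grad_N f||^2 = - <Delta_N f, f>.

   Writing phi^(k+1) - phi^k = Delta_N eta^k, the scheme reads
   dt mu^(k+1) = 3/2 eta^(k+1) - 1/2 eta^k.  Testing it with phi^(k+1) - phi^k
   and using the convexity of |v|^4/4 shows that the modified energy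
     E_N(phi^(k+1)) + ||grad_N eta^k||^2 / (4 dt) + T_k,
   T_k = ||grad_N (phi^(k+1) - phi^k)||^2 (i = 1) or eps/2 ||phi^(k+1) - phi^k||^2
   (i = 2), is nonincreasing: the explicit term is absorbed by ||grad_N eta^k||^2
   and the stabilisation A dt ||grad_N (phi^(k+1) - phi^k)||^2 once A >= eps^2/16.
   At k = 0 the modified energy is the quantity bounded by C0.  Finally E_N
   controls the H^2_N norm, since ||grad_N phi||_4^4 >= ||grad_N phi||_2^4 on the
   unit-volume torus dominates the negative term - ||grad_N phi||_2^2. *)

From HB Require Import structures.
From mathcomp Require Import all_boot all_order all_algebra.
From mathcomp Require Import all_classical all_reals all_analysis.
From mathcomp Require Import complex.
From mathcomp Require Import ring lra zify.
Import Order.TTheory GRing.Theory Num.Theory.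
Set Implicit Arguments. Unset Strict Implicit. Unset Printing Implicit Defensive.
Local Open Scope ring_scope.

Section ComplexExponential.
Variable R : realType.
Local Open Scope complex_scope.

Lemma Re_sum (I : finType) (F : I -> R[i]) :
  complex.Re (\sum_i F i) = \sum_i complex.Re (F i).
Proof. by apply: (big_morph (@complex.Re R)) => [[a b] [c d]|]. Qed.

Lemma Im_sum (I : finType) (F : I -> R[i]) :
  complex.Im (\sum_i F i) = \sum_i complex.Im (F i).
Proof. by apply: (big_morph (@complex.Im R)) => [[a b] [c d]|]. Qed.

Lemma expi0 : expi (0 : R) = 1.
Proof. by rewrite /expi cos0 sin0. Qed.

Lemma expiD (x y : R) : expi (x + y) = expi x * expi y.
Proof. by rewrite /expi cosD sinD /=; congr Complex; ring. Qed.

Lemma expiMn (x : R) n : expi (x *+ n) = expi x ^+ n.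
Proof. by elim: n => [|n IHn]; rewrite ?expi0 // mulrS expiD IHn exprS. Qed.

Lemma expi_2pi_int (z : int) : expi (2 * pi * z%:~R : R) = 1.
Proof.
have expi_2pi_nat n : expi (2 * pi * n%:R : R) = 1.
  rewrite (_ : 2 * pi * n%:R = pi *+ 2 *+ n); last by rewrite mulr_natr mulr_natl.
  by rewrite expiMn /expi cos2pi sin2pi expr1n.
case: z => n; first exact: expi_2pi_nat.
rewrite NegzE intrN mulrN -[LHS]mul1r -(expi_2pi_nat n.+1) -expiD.
by rewrite subrr expi0.
Qed.

End ComplexExponential.

Section DiscreteFourier.
Variables (R : realType) (K : nat).
Local Open Scope complex_scope.
Local Notation Nr := ((Ngrid K)%:R : R).
Local Notation h := (hstep R K).
Implicit Types (f g : grid R K) (sigma : pt K -> R[i]).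

Lemma Nr_gt0 : 0 < Nr.
Proof. by rewrite ltr0n /Ngrid addn1. Qed.

Lemma hstep3E : h ^+ 3 = (Nr ^+ 3)^-1.
Proof. by rewrite /hstep div1r exprVn. Qed.

Lemma hstep_pi_bound n : (0 < n < Ngrid K)%N -> 0 < pi * (n%:R * h) < pi.
Proof.
move=> /andP[n_gt0 n_ltN].
rewrite !mulr_gt0 ?pi_gt0 ?ltr0n ?invr_gt0 ?Nr_gt0 //=.
rewrite -[ltRHS]mulr1 ltr_pM2l ?pi_gt0 // /hstep mul1r ltr_pdivrMr ?Nr_gt0 //.
by rewrite mul1r ltr_nat.
Qed.

Lemma expi_step_neq1 (z : int) : z != 0 -> (`|z| < Ngrid K)%N ->
  expi (2 * pi * (z%:~R * h)) != 1.
Proof.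
move=> z_neq0 z_ltN; apply/eqP => -[cos1 _].
have sin_half : sin (pi * (z%:~R * h)) = 0.
  have := cos2Dsin2 (pi * (z%:~R * h)).
  have := cos_mulr2n (pi * (z%:~R * h)).
  have -> : pi * (z%:~R * h) *+ 2 = 2 * pi * (z%:~R * h) by rewrite -mulr_natl; ring.
  rewrite cos1 => c2 cs2.
  have /eqP : sin (pi * (z%:~R * h)) ^+ 2 = 0 by lra.
  by rewrite sqrf_eq0 => /eqP.
case: z z_neq0 z_ltN sin_half {cos1} => n n_neq0 n_ltN.
  have /hstep_pi_bound /sin_gt0_pi : (0 < n < Ngrid K)%N.
    by rewrite n_ltN andbT lt0n; apply: contra n_neq0 => /eqP ->.
  by move=> + sin0; rewrite sin0 ltxx.
have /hstep_pi_bound /sin_gt0_pi : (0 < n.+1 < Ngrid K)%N by [].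
move=> sin_pos; rewrite NegzE intrN mulNr mulrN sinN => /eqP.
by rewrite oppr_eq0 => /eqP sin0; move: sin_pos; rewrite sin0 ltxx.
Qed.

Lemma sum_expi_ord (z : int) : (`|z| < Ngrid K)%N ->
  \sum_(j < Ngrid K) expi (2 * pi * (z%:~R * (j%:R * h)))
  = if z == 0 then Nr%:C else 0.
Proof.
move=> z_ltN; case: eqP => [->|/eqP z_neq0].
  under eq_bigr do rewrite mul0r mulr0 expi0.
  by rewrite sumr_const card_ord rmorph_nat.
set w := expi (2 * pi * (z%:~R * h)).
have powE (j : 'I_(Ngrid K)) : expi (2 * pi * (z%:~R * (j%:R * h))) = w ^+ j.
  by rewrite /w -expiMn -mulr_natr; congr expi; ring.
under eq_bigr do rewrite powE.
have wN : w ^+ Ngrid K = 1.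
  rewrite /w -expiMn -(mulr_natr (2 * pi * (z%:~R * h)) (Ngrid K)).
  rewrite (_ : 2 * pi * (z%:~R * h) * (Ngrid K)%:R = 2 * pi * z%:~R) ?expi_2pi_int //.
  by rewrite /hstep; field; rewrite gt_eqF ?Nr_gt0.
have := subrX1 w (Ngrid K); rewrite wN subrr => /esym /eqP.
by rewrite mulf_eq0 subr_eq0 (negbTE (expi_step_neq1 z_neq0 z_ltN)) => /eqP.
Qed.

Lemma sum_pt_mul (a b c : 'I_(Ngrid K) -> R[i]) :
  \sum_(p : pt K) a p.1.1 * b p.1.2 * c p.2
  = (\sum_i a i) * (\sum_j b j) * (\sum_k c k).
Proof. by rewrite big_distrlr pair_bigA big_distrlr pair_bigA. Qed.

Lemma sum_expi_pt (z1 z2 z3 : int) :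
  (`|z1| < Ngrid K)%N -> (`|z2| < Ngrid K)%N -> (`|z3| < Ngrid K)%N ->
  \sum_(p : pt K) expi (2 * pi * (z1%:~R * (p.1.1%:R * h)
     + z2%:~R * (p.1.2%:R * h) + z3%:~R * (p.2%:R * h)))
  = if [&& z1 == 0, z2 == 0 & z3 == 0] then (Nr ^+ 3)%:C else 0.
Proof.
move=> z1_ltN z2_ltN z3_ltN.
under eq_bigr do rewrite !(mulrDr (2 * pi)) !expiD.
rewrite (sum_pt_mul (fun i => expi (2 * pi * (z1%:~R * (i%:R * h))))
  (fun i => expi (2 * pi * (z2%:~R * (i%:R * h))))
  (fun i => expi (2 * pi * (z3%:~R * (i%:R * h))))) !sum_expi_ord //.
by case: eqP; case: eqP; case: eqP => //= *;
  apply/eqP; rewrite eq_complex /=; apply/andP; split; apply/eqP; ring.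
Qed.

Definition rev_pt (q : pt K) : pt K := (rev_ord q.1.1, rev_ord q.1.2, rev_ord q.2).

Lemma phaseB (p q q' : pt K) : phase R p q - phase R p q' =
  2 * pi * ((q.1.1%:Z - q'.1.1%:Z)%:~R * (p.1.1%:R * h)
     + (q.1.2%:Z - q'.1.2%:Z)%:~R * (p.1.2%:R * h)
     + (q.2%:Z - q'.2%:Z)%:~R * (p.2%:R * h)).
Proof. by rewrite /phase /freq !intrB /=; ring. Qed.

Lemma phaseD (p q q' : pt K) : phase R p q + phase R p q' =
  2 * pi * (((q.1.1 + q'.1.1)%N%:Z - (2 * K)%N%:Z)%:~R * (p.1.1%:R * h)
     + ((q.1.2 + q'.1.2)%N%:Z - (2 * K)%N%:Z)%:~R * (p.1.2%:R * h)
     + ((q.2 + q'.2)%N%:Z - (2 * K)%N%:Z)%:~R * (p.2%:R * h)).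
Proof. by rewrite /phase /freq !intrB -!pmulrn; ring. Qed.

Lemma sum_expi_phaseB (q q' : pt K) :
  \sum_(p : pt K) expi (phase R p q - phase R p q')
  = if q == q' then (Nr ^+ 3)%:C else 0.
Proof.
have bound (a a' : 'I_(Ngrid K)) : (`|a%:Z - a'%:Z| < Ngrid K)%N.
  by have := ltn_ord a; have := ltn_ord a'; rewrite /Ngrid; lia.
have eq0E (a a' : 'I_(Ngrid K)) : (a%:Z - a'%:Z == 0) = (a == a').
  by rewrite subr_eq0 eqz_nat.
under eq_bigr do rewrite phaseB.
rewrite sum_expi_pt ?bound // !eq0E.
by case: q q' => [[a b] c] [[a' b'] c'] /=; rewrite !xpair_eqE andbA.
Qed.

Lemma sum_expi_phaseD (q q' : pt K) :
  \sum_(p : pt K) expi (phase R p q + phase R p q')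
  = if q == rev_pt q' then (Nr ^+ 3)%:C else 0.
Proof.
have bound (a a' : 'I_(Ngrid K)) : (`|(a + a')%N%:Z - (2 * K)%N%:Z| < Ngrid K)%N.
  by have := ltn_ord a; have := ltn_ord a'; rewrite /Ngrid; lia.
have eq0E (a a' : 'I_(Ngrid K)) :
    ((a + a')%N%:Z - (2 * K)%N%:Z == 0) = (a == rev_ord a').
  rewrite subr_eq0 eqz_nat; have := ltn_ord a; have := ltn_ord a'; rewrite /Ngrid.
  by move=> a'_lt a_lt; apply/eqP/eqP => [?|->]; [apply: val_inj => /=|rewrite /=]; lia.
under eq_bigr do rewrite phaseD.
rewrite sum_expi_pt ?bound // !eq0E.
by case: q q' => [[a b] c] [[a' b'] c'] /=; rewrite /rev_pt /= !xpair_eqE andbA.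
Qed.

Lemma sum_cos_phaseB (q q' : pt K) :
  \sum_(p : pt K) cos (phase R p q - phase R p q') = (q == q')%:R * Nr ^+ 3.
Proof.
have := congr1 (@complex.Re R) (sum_expi_phaseB q q'); rewrite Re_sum => ->.
by case: eqP => _ /=; rewrite ?mul1r ?mul0r.
Qed.

Lemma sum_sin_phaseB (q q' : pt K) :
  \sum_(p : pt K) sin (phase R p q - phase R p q') = 0.
Proof.
have := congr1 (@complex.Im R) (sum_expi_phaseB q q'); rewrite Im_sum => ->.
by case: eqP.
Qed.

Lemma sum_cos_phaseD (q q' : pt K) :
  \sum_(p : pt K) cos (phase R p q + phase R p q') = (q == rev_pt q')%:R * Nr ^+ 3.
Proof.
have := congr1 (@complex.Re R) (sum_expi_phaseD q q'); rewrite Re_sum => ->.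
by case: eqP => _ /=; rewrite ?mul1r ?mul0r.
Qed.

Lemma sum_sin_phaseD (q q' : pt K) :
  \sum_(p : pt K) sin (phase R p q + phase R p q') = 0.
Proof.
have := congr1 (@complex.Im R) (sum_expi_phaseD q q'); rewrite Im_sum => ->.
by case: eqP.
Qed.

Lemma sum_cos_cos (q q' : pt K) :
  \sum_(p : pt K) cos (phase R p q) * cos (phase R p q')
  = ((q == q')%:R + (q == rev_pt q')%:R) * Nr ^+ 3 / 2.
Proof.
rewrite (eq_bigr (fun p => (cos (phase R p q - phase R p q')
   + cos (phase R p q + phase R p q')) / 2)); last first.
  by move=> p _; rewrite !cosD cosN sinN; field.
by rewrite -mulr_suml big_split /= sum_cos_phaseB sum_cos_phaseD; ring.
Qed.

Lemma sum_sin_sin (q q' : pt K) :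
  \sum_(p : pt K) sin (phase R p q) * sin (phase R p q')
  = ((q == q')%:R - (q == rev_pt q')%:R) * Nr ^+ 3 / 2.
Proof.
rewrite (eq_bigr (fun p => (cos (phase R p q - phase R p q')
   - cos (phase R p q + phase R p q')) / 2)); last first.
  by move=> p _; rewrite !cosD cosN sinN; field.
by rewrite -mulr_suml big_split /= sumrN sum_cos_phaseB sum_cos_phaseD; ring.
Qed.

Lemma sum_sin_cos (q q' : pt K) :
  \sum_(p : pt K) sin (phase R p q) * cos (phase R p q') = 0.
Proof.
rewrite (eq_bigr (fun p => (sin (phase R p q - phase R p q')
   + sin (phase R p q + phase R p q')) / 2)); last first.
  by move=> p _; rewrite !sinD cosN sinN; field.
by rewrite -mulr_suml big_split /= sum_sin_phaseB sum_sin_phaseD; ring.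
Qed.

Lemma freq_rev (j : 'I_(Ngrid K)) : freq R (rev_ord j) = - freq R j.
Proof.
have /(congr1 (fun n => n%:R : R)) : ((2 * K + 1 - j.+1) + j = 2 * K)%N.
  by have := ltn_ord j; rewrite /Ngrid; lia.
by rewrite /freq /= natrD natrM /Ngrid; lra.
Qed.

Lemma phase_rev (p q : pt K) : phase R p (rev_pt q) = - phase R p q.
Proof. by rewrite /phase /rev_pt /= !freq_rev; ring. Qed.

Definition fcos (f : grid R K) (q : pt K) : R :=
  (Nr ^+ 3)^-1 * \sum_p f p * cos (phase R p q).
Definition fsin (f : grid R K) (q : pt K) : R :=
  (Nr ^+ 3)^-1 * \sum_p f p * sin (phase R p q).

Lemma fhatE f q : fhat f q = Complex (fcos f q) (- fsin f q).
Proof.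
apply/eqP; rewrite eq_complex; apply/andP; split; apply/eqP.
  rewrite /fhat mulr_sumr Re_sum /fcos mulr_sumr; apply: eq_bigr => p _.
  by rewrite /expi cosN sinN /=; ring.
rewrite /fhat mulr_sumr Im_sum /fsin mulr_sumr -sumrN; apply: eq_bigr => p _.
by rewrite /expi cosN sinN /=; ring.
Qed.

Lemma fcos_rev f q : fcos f (rev_pt q) = fcos f q.
Proof. by rewrite /fcos; under eq_bigr do rewrite phase_rev cosN. Qed.

Lemma fsin_rev f q : fsin f (rev_pt q) = - fsin f q.
Proof.
rewrite /fsin -mulrN -sumrN; congr (_ * _); apply: eq_bigr => p _.
by rewrite phase_rev sinN mulrN.
Qed.

Lemma fcos_lin (a b : R) f g q :
  fcos (fun p => a * f p + b * g p) q = a * fcos f q + b * fcos g q.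
Proof.
rewrite /fcos (eq_bigr (fun p => a * (f p * cos (phase R p q)) + b * (g p * cos (phase R p q)))).
  by rewrite big_split /= -!mulr_sumr; ring.
by move=> p _; ring.
Qed.

Lemma fsin_lin (a b : R) f g q :
  fsin (fun p => a * f p + b * g p) q = a * fsin f q + b * fsin g q.
Proof.
rewrite /fsin (eq_bigr (fun p => a * (f p * sin (phase R p q)) + b * (g p * sin (phase R p q)))).
  by rewrite big_split /= -!mulr_sumr; ring.
by move=> p _; ring.
Qed.

Lemma fmultE sigma f p : fmult sigma f p = \sum_q
  (complex.Re (sigma q) * (fcos f q * cos (phase R p q) + fsin f q * sin (phase R p q))
   - complex.Im (sigma q) * (fcos f q * sin (phase R p q) - fsin f q * cos (phase R p q))).
Proof.
rewrite /fmult Re_sum; apply: eq_bigr => q _; rewrite fhatE.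
by case: (sigma q) => a b; rewrite /expi /=; ring.
Qed.

Lemma fmult_lin sigma (a b : R) f g :
  fmult sigma (fun p => a * f p + b * g p)
  = (fun p => a * fmult sigma f p + b * fmult sigma g p).
Proof.
apply: funext => p; rewrite !fmultE !mulr_sumr -big_split /=.
by apply: eq_bigr => q _; rewrite fcos_lin fsin_lin; ring.
Qed.

Definition dotN (f g : grid R K) : R := h ^+ 3 * \sum_p f p * g p.

Lemma dotN_fmultE sigma f g : dotN (fmult sigma f) g = \sum_q
  (complex.Re (sigma q) * (fcos f q * fcos g q + fsin f q * fsin g q)
   - complex.Im (sigma q) * (fcos f q * fsin g q - fsin f q * fcos g q)).
Proof.
rewrite /dotN; under eq_bigr do rewrite fmultE mulr_suml.
rewrite exchange_big mulr_sumr; apply: eq_bigr => q _.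
set X := complex.Re (sigma q) * fcos f q + complex.Im (sigma q) * fsin f q.
set Y := complex.Re (sigma q) * fsin f q - complex.Im (sigma q) * fcos f q.
transitivity (X * fcos g q + Y * fsin g q); last by rewrite /X /Y; ring.
rewrite (eq_bigr (fun p => X * (g p * cos (phase R p q)) + Y * (g p * sin (phase R p q)))).
  by rewrite [fcos g q]/fcos [fsin g q]/fsin -hstep3E big_split /= -!mulr_sumr; ring.
by move=> p _; rewrite /X /Y; ring.
Qed.

Lemma dotN_fmult_sym sigma f g : (forall q, complex.Im (sigma q) = 0) ->
  dotN (fmult sigma f) g = dotN (fmult sigma g) f.
Proof. by move=> Im0; rewrite !dotN_fmultE; apply: eq_bigr => q _; rewrite Im0; ring. Qed.

Lemma dotN_fmult_skew sigma f g : (forall q, complex.Re (sigma q) = 0) ->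
  dotN (fmult sigma f) g = - dotN (fmult sigma g) f.
Proof.
by move=> Re0; rewrite !dotN_fmultE -sumrN; apply: eq_bigr => q _; rewrite Re0; ring.
Qed.

Lemma dotN_fmult_self sigma f : (forall q, complex.Im (sigma q) = 0) ->
  dotN (fmult sigma f) f = \sum_q complex.Re (sigma q) * (fcos f q ^+ 2 + fsin f q ^+ 2).
Proof. by move=> Im0; rewrite dotN_fmultE; apply: eq_bigr => q _; rewrite Im0; ring. Qed.

Lemma sumr_mul_eq (F : pt K -> R) q' : \sum_q F q * (q == q')%:R = F q'.
Proof.
rewrite (bigD1 q') //= eqxx mulr1 big1 ?addr0 // => q /negbTE ->.
by rewrite mulr0.
Qed.

Section OddImaginarySymbol.
Variable sigma : pt K -> R[i].
Hypothesis Re_sigma : forall q, complex.Re (sigma q) = 0.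
Hypothesis Im_sigma_rev : forall q, complex.Im (sigma (rev_pt q)) = - complex.Im (sigma q).

Lemma fcos_fmult f q' : fcos (fmult sigma f) q' = complex.Im (sigma q') * fsin f q'.
Proof.
rewrite [LHS]/fcos; under eq_bigr do rewrite fmultE mulr_suml.
rewrite exchange_big /=.
under eq_bigr => q _.
  rewrite (eq_bigr (fun p => complex.Im (sigma q) * fsin f q * (cos (phase R p q) * cos (phase R p q'))
     - complex.Im (sigma q) * fcos f q * (sin (phase R p q) * cos (phase R p q')))); last first.
    by move=> p _; rewrite Re_sigma; ring.
  rewrite sumrB -!mulr_sumr sum_cos_cos sum_sin_cos mulr0 subr0.
  over.
rewrite (eq_bigr (fun q => (complex.Im (sigma q) * fsin f q * Nr ^+ 3 / 2) *
   ((q == q')%:R + (q == rev_pt q')%:R))); last by move=> q _; ring.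
under eq_bigr do rewrite mulrDr.
rewrite big_split /= !sumr_mul_eq Im_sigma_rev fsin_rev.
by field; rewrite gt_eqF ?Nr_gt0.
Qed.

Lemma fsin_fmult f q' : fsin (fmult sigma f) q' = - complex.Im (sigma q') * fcos f q'.
Proof.
rewrite [LHS]/fsin; under eq_bigr do rewrite fmultE mulr_suml.
rewrite exchange_big /=.
under eq_bigr => q _.
  rewrite (eq_bigr (fun p => complex.Im (sigma q) * fsin f q * (sin (phase R p q') * cos (phase R p q))
     - complex.Im (sigma q) * fcos f q * (sin (phase R p q) * sin (phase R p q')))); last first.
    by move=> p _; rewrite Re_sigma; ring.
  rewrite sumrB -!mulr_sumr sum_sin_cos sum_sin_sin mulr0 sub0r.
  over.
rewrite (eq_bigr (fun q => (- complex.Im (sigma q) * fcos f q * Nr ^+ 3 / 2) * (q == q')%:R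
   + (complex.Im (sigma q) * fcos f q * Nr ^+ 3 / 2) * (q == rev_pt q')%:R)); last first.
  by move=> q _; ring.
rewrite big_split /= !sumr_mul_eq Im_sigma_rev fcos_rev.
by field; rewrite gt_eqF ?Nr_gt0.
Qed.

Lemma dotN_fmult_fmult f : dotN (fmult sigma f) (fmult sigma f)
  = \sum_q complex.Im (sigma q) ^+ 2 * (fcos f q ^+ 2 + fsin f q ^+ 2).
Proof.
rewrite dotN_fmultE; apply: eq_bigr => q _.
by rewrite Re_sigma fcos_fmult fsin_fmult; ring.
Qed.

End OddImaginarySymbol.

Lemma dotN_Dx_skew f g : dotN (Dx f) g = - dotN (Dx g) f.
Proof. exact: dotN_fmult_skew. Qed.
Lemma dotN_Dy_skew f g : dotN (Dy f) g = - dotN (Dy g) f.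
Proof. exact: dotN_fmult_skew. Qed.
Lemma dotN_Dz_skew f g : dotN (Dz f) g = - dotN (Dz g) f.
Proof. exact: dotN_fmult_skew. Qed.

Lemma dotN_LapN_sym f g : dotN (LapN f) g = dotN (LapN g) f.
Proof. exact: dotN_fmult_sym. Qed.

Lemma vnrm2sqE (u : vgrid R K) :
  vnrm2sq u = dotN u.1.1 u.1.1 + dotN u.1.2 u.1.2 + dotN u.2 u.2.
Proof. by rewrite /vnrm2sq /dotN /vsq -!mulrDr -!big_split. Qed.

Lemma vnrm2sq_gradN f : vnrm2sq (gradN f) = - dotN (LapN f) f.
Proof.
rewrite vnrm2sqE /gradN /Dx /Dy /Dz /LapN /=.
rewrite !dotN_fmult_fmult ?dotN_fmult_self //; try by move=> q; rewrite /= freq_rev mulrN.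
by rewrite -!big_split -sumrN; apply: eq_bigr => q _ /=; ring.
Qed.

End DiscreteFourier.

Section GridInnerProduct.
Variables (R : realType) (K : nat).
Implicit Types (f g u v w : grid R K) (sigma : pt K -> R[i]).
Local Notation h := (hstep R K).

Lemma hstep3_ge0 : 0 <= h ^+ 3.
Proof. by rewrite hstep3E invr_ge0 exprn_ge0 // ltW // Nr_gt0. Qed.

Lemma dotNC f g : dotN f g = dotN g f.
Proof. by rewrite /dotN; under eq_bigr do rewrite mulrC. Qed.

Lemma dotN_ge0 f : 0 <= dotN f f.
Proof. by rewrite /dotN mulr_ge0 ?hstep3_ge0 ?sumr_ge0 // => p _; rewrite -expr2 sqr_ge0. Qed.

Lemma nrm2sq_dotN f : nrm2sq f = dotN f f.
Proof. by []. Qed.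

Lemma dotNDl f g w : dotN (gadd f g) w = dotN f w + dotN g w.
Proof.
rewrite /dotN -mulrDr -big_split; congr (_ * _).
by apply: eq_bigr => p _; rewrite mulrDl.
Qed.

Lemma dotNBl f g w : dotN (gsub f g) w = dotN f w - dotN g w.
Proof.
rewrite /dotN -mulrBr -sumrB; congr (_ * _).
by apply: eq_bigr => p _; rewrite mulrBl.
Qed.

Lemma dotNZl c f w : dotN (gscale c f) w = c * dotN f w.
Proof.
rewrite /dotN mulrCA; congr (_ * _).
by rewrite mulr_sumr; apply: eq_bigr => p _; rewrite mulrA.
Qed.

Lemma dotNDr f g w : dotN w (gadd f g) = dotN w f + dotN w g.
Proof. by rewrite dotNC dotNDl !(dotNC w). Qed.

Lemma dotNBr f g w : dotN w (gsub f g) = dotN w f - dotN w g.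
Proof. by rewrite dotNC dotNBl !(dotNC w). Qed.

Lemma dotNZr c f w : dotN w (gscale c f) = c * dotN w f.
Proof. by rewrite dotNC dotNZl dotNC. Qed.

Lemma dotN_subsqr u v : dotN (gsub u v) (gsub u v) = dotN u u - 2 * dotN u v + dotN v v.
Proof. by rewrite dotNBl !dotNBr (dotNC v u); ring. Qed.

Lemma fmultD sigma f g : fmult sigma (gadd f g) = gadd (fmult sigma f) (fmult sigma g).
Proof.
have -> : gadd f g = (fun p => 1 * f p + 1 * g p) by apply: funext => p; rewrite !mul1r.
by rewrite fmult_lin; apply: funext => p; rewrite !mul1r.
Qed.

Lemma fmultB sigma f g : fmult sigma (gsub f g) = gsub (fmult sigma f) (fmult sigma g).
Proof.
have -> : gsub f g = (fun p => 1 * f p + (-1) * g p) by apply: funext => p; rewrite /gsub; ring.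
by rewrite fmult_lin; apply: funext => p; rewrite /gsub; ring.
Qed.

Lemma fmultZ sigma c f : fmult sigma (gscale c f) = gscale c (fmult sigma f).
Proof.
have -> : gscale c f = (fun p => c * f p + 0 * f p) by apply: funext => p; rewrite /gscale; ring.
by rewrite fmult_lin; apply: funext => p; rewrite /gscale; ring.
Qed.

Lemma LapND f g : LapN (gadd f g) = gadd (LapN f) (LapN g).
Proof. exact: fmultD. Qed.

Lemma LapNB f g : LapN (gsub f g) = gsub (LapN f) (LapN g).
Proof. exact: fmultB. Qed.

Lemma LapNZ c f : LapN (gscale c f) = gscale c (LapN f).
Proof. exact: fmultZ. Qed.

Lemma LapN_lin (c c' : R) f g :
  LapN (fun p => c * f p + c' * g p) = (fun p => c * LapN f p + c' * LapN g p).
Proof. exact: fmult_lin. Qed.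

Lemma dotN_LapN_subsqr u v : dotN (LapN (gsub u v)) (gsub u v)
  = dotN (LapN u) u - 2 * dotN (LapN u) v + dotN (LapN v) v.
Proof. by rewrite LapNB dotNBl !dotNBr (dotN_LapN_sym v u); ring. Qed.

Lemma vnrm2sq_ge0 (U : vgrid R K) : 0 <= vnrm2sq U.
Proof.
rewrite /vnrm2sq mulr_ge0 ?hstep3_ge0 ?sumr_ge0 // => p _.
by rewrite /vsq !addr_ge0 ?sqr_ge0.
Qed.

Lemma vnrm2sq_gradNB u v : vnrm2sq (gradN (gsub u v))
  = vnrm2sq (gradN u) + vnrm2sq (gradN v) + 2 * dotN (LapN u) v.
Proof.
by rewrite !vnrm2sq_gradN dotN_LapN_subsqr; ring.
Qed.

Lemma vnrm2sq_gradNZ c f : vnrm2sq (gradN (gscale c f)) = c ^+ 2 * vnrm2sq (gradN f).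
Proof. by rewrite !vnrm2sq_gradN LapNZ dotNZl dotNZr; ring. Qed.

Lemma nrm2sqZ c f : nrm2sq (gscale c f) = c ^+ 2 * nrm2sq f.
Proof. by rewrite !nrm2sq_dotN dotNZl dotNZr mulrA -expr2. Qed.

Lemma vnrm2sq_gradN_le f : 2 * vnrm2sq (gradN f) <= nrm2sq f + nrm2sq (LapN f).
Proof.
have := dotN_ge0 (gadd f (LapN f)).
by rewrite dotNDl !dotNDr (dotNC f (LapN f)) vnrm2sq_gradN !nrm2sq_dotN; lra.
Qed.

Lemma EN_dotN (a : R) f : EN a f = vnrm4pow4 (gradN f) / 4 + a / 2 * dotN f f
  + dotN (LapN f) f + dotN (LapN f) (LapN f) / 2.
Proof. by rewrite /EN vnrm2sq_gradN !nrm2sq_dotN; ring. Qed.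

End GridInnerProduct.

(* Convexity of v |-> |v|^4 / 4, whose gradient is |v|^2 v. *)
Lemma quartic_convex (R : realFieldType) (u1 u2 u3 v1 v2 v3 : R) :
  ((u1 ^+ 2 + u2 ^+ 2 + u3 ^+ 2) ^+ 2 - (v1 ^+ 2 + v2 ^+ 2 + v3 ^+ 2) ^+ 2) / 4
  <= (u1 - v1) * ((u1 ^+ 2 + u2 ^+ 2 + u3 ^+ 2) * u1)
   + (u2 - v2) * ((u1 ^+ 2 + u2 ^+ 2 + u3 ^+ 2) * u2)
   + (u3 - v3) * ((u1 ^+ 2 + u2 ^+ 2 + u3 ^+ 2) * u3).
Proof.
set s := u1 ^+ 2 + _ + _; set t := v1 ^+ 2 + _ + _.
set uv := u1 * v1 + u2 * v2 + u3 * v3.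
have s_ge0 : 0 <= s by rewrite !addr_ge0 ?sqr_ge0.
have uv_le : 2 * uv <= s + t.
  have := sqr_ge0 (u1 - v1); have := sqr_ge0 (u2 - v2); have := sqr_ge0 (u3 - v3).
  by rewrite /uv /s /t; nra.
have : 0 <= s * (s + t - 2 * uv) by rewrite mulr_ge0 // subr_ge0.
have -> : (u1 - v1) * (s * u1) + (u2 - v2) * (s * u2) + (u3 - v3) * (s * u3)
   = s * s - s * uv by rewrite /s /uv; ring.
by have := sqr_ge0 (s - t); nra.
Qed.

Section DiscreteEnergy.
Variables (R : realType) (K : nat).
Implicit Types (x y : grid R K) (U : vgrid R K).
Local Notation h := (hstep R K).

Lemma dotN_nlterm_ge x y :
  (vnrm4pow4 (gradN x) - vnrm4pow4 (gradN y)) / 4 <= dotN (nlterm x) (gsub x y).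
Proof.
set V := vscale (vsq (gradN x)) (gradN x).
have -> : dotN (nlterm x) (gsub x y) = - (dotN (Dx V.1.1) (gsub x y)
    + dotN (Dy V.1.2) (gsub x y) + dotN (Dz V.2) (gsub x y)).
  rewrite /dotN -!mulrDr -mulrN -!big_split -sumrN; congr (_ * _).
  by apply: eq_bigr => p _; rewrite /V /nlterm /divN /=; ring.
rewrite dotN_Dx_skew dotN_Dy_skew dotN_Dz_skew /Dx /Dy /Dz !fmultB.
rewrite -/(Dx x) -/(Dx y) -/(Dy x) -/(Dy y) -/(Dz x) -/(Dz y) -!opprD opprK /vnrm4pow4.
rewrite /dotN -mulrBr -!mulrDr -sumrB -!big_split -mulrA mulr_suml.
rewrite ler_wpM2l ?hstep3_ge0 // ler_sum // => p _.
exact: quartic_convex.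
Qed.

Lemma card_pt : #|{: pt K}| = (Ngrid K ^ 3)%N.
Proof. by rewrite !card_prod !card_ord !expnS expn0 muln1 mulnA. Qed.

(* Jensen's inequality on the grid, whose total volume N^3 h^3 is 1. *)
Lemma sqr_vnrm2sq_le U : vnrm2sq U ^+ 2 <= vnrm4pow4 U.
Proof.
set s := vsq U; set m := vnrm2sq U.
have : 0 <= h ^+ 3 * \sum_p (s p - m) ^+ 2.
  by rewrite mulr_ge0 ?hstep3_ge0 ?sumr_ge0 // => p _; rewrite sqr_ge0.
rewrite (eq_bigr (fun p => s p ^+ 2 - 2 * m * s p + m ^+ 2)); last by move=> p _; ring.
rewrite !big_split /= sumrN -mulr_sumr sumr_const card_pt.
have volume1 : h ^+ 3 * (m ^+ 2 *+ (Ngrid K ^ 3)%N) = m ^+ 2.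
  by rewrite -mulr_natr natrX hstep3E; field; rewrite gt_eqF ?Nr_gt0.
rewrite !mulrDr volume1 mulrN mulrCA -/m.
by rewrite [h ^+ 3 * \sum_i s i](_ : _ = m) // /vnrm4pow4 -/s; lra.
Qed.

Lemma H2norm_le_EN (a C : R) x : 0 < a -> EN a x <= C ->
  H2norm x <= Num.sqrt ((2 / a + 3) * (C + 4)).
Proof.
move=> a_gt0 EN_le; rewrite /H2norm ler_wsqrtr //.
have := sqr_vnrm2sq_le (gradN x); have := sqr_ge0 (vnrm2sq (gradN x) - 4).
have := vnrm2sq_ge0 (gradN x); have := dotN_ge0 x; have := dotN_ge0 (LapN x).
move: EN_le; rewrite /EN !nrm2sq_dotN.
set g := vnrm2sq _; set X := dotN x x; set L := dotN _ _ => EN_le L_ge0 X_ge0 g_ge0 sq_ge0 V4_ge.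
have bound : g + a / 2 * X + L / 2 <= C + 4 by lra.
have X_le : X <= 2 / a * (C + 4).
  rewrite (_ : 2 / a * (C + 4) = (C + 4) / (a / 2)); last by field; rewrite gt_eqF.
  by rewrite ler_pdivlMr ?divr_gt0 //; lra.
have aX_ge0 : 0 <= a / 2 * X by apply: mulr_ge0 => //; apply: divr_ge0 => //; apply: ltW.
by rewrite mulrDl; lra.
Qed.
End DiscreteEnergy.

Section TestedPotentials.
Variables (R : realType) (K : nat).
Implicit Types (x y z : grid R K).

Lemma EN_subE (a : R) x d :
  EN a (gsub x d) = vnrm4pow4 (gradN (gsub x d)) / 4
   + a / 2 * (dotN x x - 2 * dotN x d + dotN d d)
   + (dotN (LapN x) x - 2 * dotN (LapN x) d + dotN (LapN d) d)
   + (dotN (LapN x) (LapN x) - 2 * dotN (LapN x) (LapN d) + dotN (LapN d) (LapN d)) / 2.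
Proof. by rewrite EN_dotN dotN_subsqr dotN_LapN_subsqr LapNB dotN_subsqr. Qed.

Lemma dotN_mu1_ge (a A dt : R) x y z :
  EN a x - EN a y + a / 2 * nrm2sq (gsub x y) + nrm2sq (LapN (gsub x y)) / 2
  + A * dt * vnrm2sq (gradN (gsub x y)) - vnrm2sq (gradN (gsub y z))
  <= dotN (mu1 a A dt x y z) (gsub x y).
Proof.
set d := gsub x y; set w := gsub y z.
have y_eq : y = gsub x d by apply: funext => p; rewrite /d /gsub; ring.
have mu1E : mu1 a A dt x y z = gadd (gsub (gadd (gadd (nlterm x) (gscale a x))
    (gscale 2 (LapN (gadd (gsub x d) w)))) (gscale (A * dt) (LapN d))) (LapN (LapN x)).
  have -> : gadd (gsub x d) w = (fun r => 2 * y r - z r).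
    by apply: funext => r; rewrite /d /w /gadd /gsub; ring.
  by apply: funext => p; rewrite /mu1 /gadd /gsub /gscale.
have NL := dotN_nlterm_ge x y; rewrite -/d [in gradN y]y_eq in NL.
have := vnrm2sq_ge0 (gradN (gsub w d)); rewrite vnrm2sq_gradNB => wd_ge0.
rewrite mu1E [in EN a y]y_eq EN_subE; clearbody d w.
rewrite dotNDl dotNBl dotNDl dotNDl !dotNZl LapND dotNDl LapNB dotNBl.
rewrite (dotN_LapN_sym (LapN x) d) (dotNC (LapN d) (LapN x)).
rewrite EN_dotN !vnrm2sq_gradN !nrm2sq_dotN in wd_ge0 *.
lra.
Qed.

Lemma dotN_mu2_ge (eps A dt : R) x y z : 0 <= eps ->
  EN (1 - eps) x - EN (1 - eps) y + nrm2sq (gsub x y) / 2 - eps / 2 * nrm2sq (gsub y z)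
  - vnrm2sq (gradN (gsub x y)) + nrm2sq (LapN (gsub x y)) / 2
  + A * dt * vnrm2sq (gradN (gsub x y))
  <= dotN (mu2 eps A dt x y z) (gsub x y).
Proof.
move=> eps_ge0; set d := gsub x y; set w := gsub y z.
have y_eq : y = gsub x d by apply: funext => p; rewrite /d /gsub; ring.
have mu2E : mu2 eps A dt x y z = gadd (gadd (gadd (gsub (gsub (nlterm x)
    (gscale eps (gadd (gsub x d) w))) (gscale (A * dt) (LapN d))) x)
    (gscale 2 (LapN x))) (LapN (LapN x)).
  have -> : gadd (gsub x d) w = (fun r => 2 * y r - z r).
    by apply: funext => r; rewrite /d /w /gadd /gsub; ring.
  by apply: funext => p; rewrite /mu2 /gadd /gsub /gscale; ring.
have NL := dotN_nlterm_ge x y; rewrite -/d [in gradN y]y_eq in NL.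
have := mulr_ge0 eps_ge0 (dotN_ge0 (gsub w d)); rewrite dotN_subsqr => wd_ge0.
rewrite mu2E [in EN _ y]y_eq EN_subE; clearbody d w.
rewrite dotNDl dotNDl dotNDl dotNBl dotNBl !dotNZl dotNDl dotNBl.
rewrite (dotN_LapN_sym (LapN x) d) (dotNC (LapN d) (LapN x)).
rewrite EN_dotN !vnrm2sq_gradN !nrm2sq_dotN.
lra.
Qed.
End TestedPotentials.

Section SchemeStep.
Variables (R : realType) (K : nat) (eps A dt : R).
Hypotheses (dt_gt0 : 0 < dt) (A_ge : eps ^+ 2 / 16 <= A).
Implicit Types (x y z e : grid R K).

(* The cross term <Delta_N e, e'> is controlled by |grad_N (e - e')|^2 >= 0. *)
Lemma dotN_scheme_le x y e e' mu :
  gsub x y = LapN e' ->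
  gscale dt mu = gsub (gscale (3 / 2) e') (gscale (1 / 2) e) ->
  dotN mu (gsub x y) <= vnrm2sq (gradN e) / (4 * dt) - 5 * (vnrm2sq (gradN e') / (4 * dt)).
Proof.
move=> d_eq mu_eq; rewrite -(ler_pM2l dt_gt0) -dotNZl mu_eq d_eq dotNBl !dotNZl.
rewrite (dotNC e') (dotNC e) (dotN_LapN_sym e' e).
have := vnrm2sq_ge0 (gradN (gsub e e')); rewrite vnrm2sq_gradNB !vnrm2sq_gradN => ge0.
rewrite [X in _ <= X](_ : _ = - dotN (LapN e) e / 4 + 5 / 4 * dotN (LapN e') e').
  by lra.
by field; rewrite gt_eqF.
Qed.

(* Expand |grad_N (e' + c d)|^2 >= 0 with c = eps dt / 4; A >= eps^2/16 absorbs
   the c^2 term. *)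
Lemma nrm2sq_increment_le x y e' : gsub x y = LapN e' ->
  eps / 2 * nrm2sq (gsub x y)
  <= 4 * (vnrm2sq (gradN e') / (4 * dt)) + A * dt * vnrm2sq (gradN (gsub x y)).
Proof.
move=> d_eq; set d := gsub x y.
have := vnrm2sq_ge0 (gradN (gsub e' (gscale (- (eps / 4 * dt)) d))).
rewrite vnrm2sq_gradNB vnrm2sq_gradNZ dotNZr -d_eq -nrm2sq_dotN => ge0.
have := ler_wpM2r (mulr_ge0 (sqr_ge0 dt) (vnrm2sq_ge0 (gradN d))) A_ge => A_absorb.
rewrite -(ler_pM2l dt_gt0).
rewrite [X in _ <= X](_ : _ = vnrm2sq (gradN e') + A * (dt ^+ 2 * vnrm2sq (gradN d))).
  by lra.
by field; rewrite gt_eqF.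
Qed.

Lemma modified_energy_step1 x y z e e' :
  gsub x y = LapN e' ->
  gscale dt (mu1 (1 - eps) A dt x y z) = gsub (gscale (3 / 2) e') (gscale (1 / 2) e) ->
  EN (1 - eps) x + vnrm2sq (gradN e') / (4 * dt) + vnrm2sq (gradN (gsub x y))
  <= EN (1 - eps) y + vnrm2sq (gradN e) / (4 * dt) + vnrm2sq (gradN (gsub y z)).
Proof.
move=> d_eq mu_eq.
have := dotN_scheme_le d_eq mu_eq; have := nrm2sq_increment_le d_eq.
have := vnrm2sq_gradN_le (gsub x y); have := dotN_mu1_ge (1 - eps) A dt x y z.
lra.
Qed.

Lemma modified_energy_step2 x y z e e' : 0 <= eps ->
  gsub x y = LapN e' ->
  gscale dt (mu2 eps A dt x y z) = gsub (gscale (3 / 2) e') (gscale (1 / 2) e) ->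
  EN (1 - eps) x + vnrm2sq (gradN e') / (4 * dt) + eps / 2 * nrm2sq (gsub x y)
  <= EN (1 - eps) y + vnrm2sq (gradN e) / (4 * dt) + eps / 2 * nrm2sq (gsub y z).
Proof.
move=> eps_ge0 d_eq mu_eq.
have := dotN_scheme_le d_eq mu_eq; have := nrm2sq_increment_le d_eq.
have := vnrm2sq_gradN_le (gsub x y); have := dotN_mu2_ge A dt x y z eps_ge0.
lra.
Qed.
End SchemeStep.

Section Scheme.
Variables (R : realType) (K : nat) (eps A dt : R) (b : bool) (psi : nat -> grid R K).
Hypotheses (dt_gt0 : 0 < dt) (eps_ge0 : 0 <= eps) (A_ge : eps ^+ 2 / 16 <= A).
Local Notation mu := (mu0 (1 - eps) (psi 1%N)).
Hypothesis psi0E : psi 0%N = (fun p => psi 1%N p - dt * LapN mu p).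

Definition scheme_mu k :=
  if b then mu1 (1 - eps) A dt (psi k.+2) (psi k.+1) (psi k)
  else mu2 eps A dt (psi k.+2) (psi k.+1) (psi k).

Hypothesis schemeE : forall k,
  (fun p => (3 / 2 * psi k.+2 p - 2 * psi k.+1 p + 1 / 2 * psi k p) / dt)
  = LapN (scheme_mu k).

(* psi k.+1 is phi^k, so [increment_potential k] is the eta^(k-1) of the scheme. *)
Fixpoint increment_potential k : grid R K :=
  if k is k'.+1 then fun p => 2 / 3 * (dt * scheme_mu k' p + 1 / 2 * increment_potential k' p)
  else gscale dt mu.
Local Notation eta := increment_potential.

Lemma psi_increment k : gsub (psi k.+1) (psi k) = LapN (eta k).
Proof.
elim: k => [|k IHk].
  by rewrite /= LapNZ; apply: funext => p; rewrite /gsub /gscale psi0E; ring.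
have -> : eta k.+1 = (fun p => 2 / 3 * dt * scheme_mu k p + 1 / 3 * eta k p).
  by apply: funext => p /=; field.
rewrite LapN_lin -IHk -schemeE; apply: funext => p /=.
by rewrite /gsub; field; rewrite gt_eqF.
Qed.

Lemma scheme_mu_potential k :
  gscale dt (scheme_mu k) = gsub (gscale (3 / 2) (eta k.+1)) (gscale (1 / 2) (eta k)).
Proof. by apply: funext => p; rewrite /gscale /gsub /=; field. Qed.

Definition modified_energy k :=
  EN (1 - eps) (psi k.+1) + vnrm2sq (gradN (eta k)) / (4 * dt)
  + if b then vnrm2sq (gradN (gsub (psi k.+1) (psi k)))
    else eps / 2 * nrm2sq (gsub (psi k.+1) (psi k)).

Lemma modified_energy_nonincreasing k : modified_energy k.+1 <= modified_energy k.
Proof.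
have := scheme_mu_potential k; rewrite /modified_energy /scheme_mu.
case: b => mu_eq.
  by have := modified_energy_step1 dt_gt0 A_ge (psi_increment k.+1) mu_eq.
by have := modified_energy_step2 dt_gt0 A_ge eps_ge0 (psi_increment k.+1) mu_eq.
Qed.

Lemma modified_energy0 : modified_energy 0 =
  EN (1 - eps) (psi 1%N) + dt / 4 * vnrm2sq (gradN mu)
  + if b then dt ^+ 2 * vnrm2sq (gradN (LapN mu))
    else eps * dt ^+ 2 / 2 * nrm2sq (LapN mu).
Proof.
rewrite /modified_energy psi_increment /= LapNZ vnrm2sq_gradNZ vnrm2sq_gradNZ nrm2sqZ.
by case: b; congr (_ + _ + _); field; rewrite ?gt_eqF.
Qed.

Lemma EN_le_modified_energy k : EN (1 - eps) (psi k.+1) <= modified_energy k.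
Proof.
rewrite /modified_energy -addrA lerDl addr_ge0 //.
  by rewrite divr_ge0 ?vnrm2sq_ge0 // mulr_ge0 // ltW.
by case: b; rewrite ?vnrm2sq_ge0 // mulr_ge0 ?divr_ge0 // nrm2sq_dotN dotN_ge0.
Qed.

Lemma EN_scheme_le (C0 : R) m : modified_energy 0 <= C0 -> EN (1 - eps) (psi m.+1) <= C0.
Proof.
move=> init; apply: le_trans (EN_le_modified_energy m) _.
elim: m => [//|m IHm]; exact: le_trans (modified_energy_nonincreasing m) IHm.
Qed.

End Scheme.

Unset Implicit Arguments.

Theorem corollary3p1 (R : realType) (eps A : R) (b : bool) (C0 : R) :
  0 < eps < 1 -> eps ^+ 2 / 16 <= A ->
  exists C1 : R, 0 < C1 /\
  forall (K : nat) (dt : R) (psi : nat -> grid R K),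
    0 < dt ->
    let a := 1 - eps in
    let mu := mu0 a (psi 1%N) in
    psi 0%N = (fun p => psi 1%N p - dt * LapN (mu) p) ->
    (forall k : nat,
       (fun p => (3 / 2 * psi k.+2 p - 2 * psi k.+1 p + 1 / 2 * psi k p) / dt)
       = LapN (if b then mu1 a A dt (psi k.+2) (psi k.+1) (psi k)
               else mu2 eps A dt (psi k.+2) (psi k.+1) (psi k))) ->
    (if b then
       EN a (psi 1%N) + dt / 4 * vnrm2sq (gradN mu)
       + dt ^+ 2 * vnrm2sq (gradN (LapN mu)) <= C0
     else
       EN a (psi 1%N) + dt / 4 * vnrm2sq (gradN mu)
       + eps * dt ^+ 2 / 2 * nrm2sq (LapN mu) <= C0) ->
    forall m : nat, (1 <= m)%N -> H2norm (psi m.+1) <= C1.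
Proof.
move=> /andP[eps_gt0 eps_lt1] A_ge.
have a_gt0 : 0 < 1 - eps by rewrite subr_gt0.
exists (Num.sqrt ((2 / (1 - eps) + 3) * (`|C0| + 4))); split.
  have := normr_ge0 C0; have : 0 < 2 / (1 - eps) by rewrite divr_gt0.
  by move=> ? ?; rewrite sqrtr_gt0 mulr_gt0 //; lra.
move=> K dt psi dt_gt0 a mu psi0E schemeE init m _.
apply: H2norm_le_EN a_gt0 _; apply: le_trans (ler_norm C0).
apply: (EN_scheme_le dt_gt0 (ltW eps_gt0) A_ge psi0E schemeE).
by move: init; rewrite (modified_energy0 dt_gt0 psi0E schemeE); case: (b).
Qed.
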